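(* Let $N\ge2$, $\sigma=(\sigma_1,\dots,\sigma_N)'$ with $\sigma_i>0$. Let $R$ be the $(N-1)\times(N-1)$ tridiagonal matrix with $R_{ii}=1$, $R_{i,i+1}=R_{i+1,i}=-1/2$ (other entries $0$), let $A$ be the $(N-1)\times(N-1)$ tridiagonal matrix with $A_{ii}=\sigma_i^2+\sigma_{i+1}^2$, $A_{i,i+1}=A_{i+1,i}=-\sigma_{i+1}^2$ (other entries $0$), and let $\rho_{kl}$ denote the entries of $R^{-1}$. For $1\le k\le l\le N-1$ set $$c_{k,l}(\sigma)=\mathrm{tr}(R^{-1}A)-2\frac{(R^{-1}AR^{-1})_{kl}}{\rho_{kl}}.$$ Then: (i) $c_{k,l}(\sigma)\ge0$ for $2\le k\le l\le N-2$; (ii) $c_{1,l}(\sigma)=c_l(\sigma)$ for $1\le l\le N-1$; (iii) $c_{k,N-1}(\sigma)=c_{N-k}(\sigma^{\leftarrow})$ for $1\le k\le N-1$.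
   Context: For $\alpha=(\alpha_1,\dots,\alpha_M)'\in\mathbb{R}^M$ ($M\ge2$) and $l=1,\dots,M-1$: $c_l(\alpha)=-\frac{2(M-1)}{M}\alpha_1^2+\frac{2(M+1)}{M}\sum_{p=2}^l\alpha_p^2+\frac{2(M-1)(M-l)-4l}{(M-l)M}\sum_{p=l+1}^M\alpha_p^2$, and $\alpha^{\leftarrow}=(\alpha_M,\dots,\alpha_1)'$. Here $M=N$. (All entries $\rho_{kl}$ of $R^{-1}$ are positive.) *)

From mathcomp Require Import all_boot all_order all_algebra.
Set Implicit Arguments. Unset Strict Implicit. Unset Printing Implicit Defensive.
Import Order.TTheory GRing.Theory Num.Theory.
Local Open Scope ring_scope.

Section Defs.
Variable R : realFieldType.

(* 1-based access to a vector: at1 s k = s_k for 1 <= k <= N, 0 otherwise *)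
Definition at1 (N : nat) (s : 'I_N -> R) (k : nat) : R :=
  oapp s 0 (insub k.-1).

(* 1-based access to a matrix entry: mxat M k l = M_{kl}, 0 out of range *)
Definition mxat (n : nat) (M : 'M[R]_n) (k l : nat) : R :=
  match insub k.-1, insub l.-1 with
  | Some i, Some j => M i j
  | _, _ => 0
  end.

Definition Rmat (n : nat) : 'M[R]_n :=
  \matrix_(i, j) (if i == j then 1
                  else if ((i : nat).+1 == j) || ((j : nat).+1 == i) then - (1 / 2%:R)
                  else 0).

(* A : (N-1) x (N-1); paper (1-based) A_ii = s_i^2 + s_(i+1)^2,
   A_(i,i+1) = A_(i+1,i) = - s_(i+1)^2 . With 0-based i,j the 1-based
   indices are i+1, j+1. *)
Definition Amat (N : nat) (s : 'I_N -> R) : 'M[R]_(N.-1) :=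
  \matrix_(i, j) (if i == j then at1 s (i : nat).+1 ^+ 2 + at1 s (i : nat).+2 ^+ 2
                  else if ((i : nat).+1 == j) || ((j : nat).+1 == i)
                  then - at1 s (maxn i j).+1 ^+ 2
                  else 0).

Definition ckl (N : nat) (s : 'I_N -> R) (k l : nat) : R :=
  let Ri := invmx (Rmat N.-1) in
  \tr (Ri *m Amat s) - 2%:R * mxat (Ri *m Amat s *m Ri) k l / mxat Ri k l.

Definition cl (M : nat) (a : 'I_M -> R) (l : nat) : R :=
  - (2%:R * (M%:R - 1) / M%:R) * at1 a 1 ^+ 2
  + (2%:R * (M%:R + 1) / M%:R) * \sum_(2 <= p < l.+1) at1 a p ^+ 2
  + ((2%:R * (M%:R - 1) * (M - l)%:R - 4%:R * l%:R) / ((M - l)%:R * M%:R))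
      * \sum_(l.+1 <= p < M.+1) at1 a p ^+ 2.

Definition revv (M : nat) (a : 'I_M -> R) : 'I_M -> R := fun i => a (rev_ord i).

End Defs.

From mathcomp Require Import all_boot all_order all_algebra.
From mathcomp Require Import zify ring.
Import Order.TTheory GRing.Theory Num.Theory.
Local Open Scope ring_scope.

(* The inverse of R is explicit: rho_kl = 2 min(k,l) (N - max(k,l)) / N.  With the
   N x (N-1) difference matrix B, (B x)_j = x_j - x_(j-1), one has 2 R = B^T B and
   A = B^T diag(sigma^2) B, so that tr(R^-1 A) = sum_j sigma_j^2 (B R^-1 B^T)_jj and
   (R^-1 A R^-1)_kl = sum_j sigma_j^2 (B R^-1)_jk (B R^-1)_jl.  The entries of B R^-1
   are piecewise constant in j (2(N-k)/N for j <= k, -2k/N for j > k), hence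
   c_kl(sigma) = sum_j w_j sigma_j^2 with weights w_j taking one value on each of
   j <= k, k < j <= l and l < j.  All three claims are comparisons of these weights
   (with each other, or with the weights of c_l). *)

Section DifferenceMatrix.
Variable R : comPzRingType.

Lemma sum_delta_succ n (F : nat -> R) c :
  \sum_(m < n) (m.+1 == c)%:R * F m.+1 = (0 < c <= n)%N%:R * F c.
Proof.
case: c => [|c]; first by rewrite mul0r big1 // => m _; rewrite mul0r.
case: (ltnP c n) => [cn|nc]; last first.
  rewrite mul0r big1 // => m _; rewrite eqSS.
  by case: eqP => [em|]; [move: (ltn_ord m); rewrite em ltnNge nc | rewrite mul0r].
rewrite mul1r (bigD1 (Ordinal cn)) //= eqxx mul1r big1 ?addr0 // => m.
by rewrite eqSS -val_eqE /= eq_sym => /negbTE ->; rewrite mul0r.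
Qed.

Definition diffn (j k : nat) : R := (j == k)%:R - (j == k.+1)%:R.

(* Indices are 1-based inside [diffn]; the boundary values x_0 = x_(p+1) = 0 are implicit. *)
Definition diffmx p : 'M[R]_(p.+1, p) := \matrix_(j, k) diffn j.+1 k.+1.

Lemma mul_diffmx p q (f : nat -> nat -> R) :
  (forall k, f 0%N k = 0) -> (forall c k, (p < c)%N -> f c k = 0) ->
  diffmx p *m (\matrix_(i < p, k < q) f i.+1 k.+1) =
  \matrix_(j, k) (f j.+1 k.+1 - f j k.+1).
Proof.
move=> f0 fp; apply/matrixP => j k; rewrite !mxE.
pose F c := f c k.+1.
transitivity (\sum_(m < p) (m.+1 == j.+1)%:R * F m.+1
              - \sum_(m < p) (m.+1 == j)%:R * F m.+1).
  by rewrite -sumrB; apply: eq_bigr => m _; rewrite !mxE /diffn mulrBl !(eq_sym (j : nat).+1).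
have jp : (j <= p)%N := ltn_ord j.
rewrite !sum_delta_succ /F jp.
case: (leqP j.+1 p) => [_|pj]; last rewrite [f j.+1 _]fp //.
all: by case: (nat_of_ord j) => [|i]; rewrite ?f0 ?mul1r ?mul0r.
Qed.

Lemma trmx_diffmx_mul p q (f : nat -> nat -> R) :
  (diffmx p)^T *m (\matrix_(j < p.+1, k < q) f j.+1 k.+1) =
  \matrix_(i, k) (f i.+1 k.+1 - f i.+2 k.+1).
Proof.
apply/matrixP => i k; rewrite !mxE.
pose F c := f c k.+1.
transitivity (\sum_(m < p.+1) (m.+1 == i.+1)%:R * F m.+1
              - \sum_(m < p.+1) (m.+1 == i.+2)%:R * F m.+1).
  by rewrite -sumrB; apply: eq_bigr => m _; rewrite !mxE /diffn mulrBl.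
by rewrite !sum_delta_succ /= !ltnS ltn_ord ltnW ?ltn_ord // !mul1r.
Qed.

Lemma mul_trmx_diffmx p q (f : nat -> nat -> R) :
  (forall i, f i 0%N = 0) -> (forall i c, (p < c)%N -> f i c = 0) ->
  (\matrix_(i < q, k < p) f i.+1 k.+1) *m (diffmx p)^T =
  \matrix_(i, j) (f i.+1 j.+1 - f i.+1 j).
Proof.
move=> f0 fp; rewrite -[LHS]trmxK trmx_mul trmxK.
rewrite (_ : _^T = \matrix_(k < p, i < q) f i.+1 k.+1); last first.
  by apply/matrixP => k i; rewrite !mxE.
rewrite (mul_diffmx _ _ (fun k i => f i k)) //; last by move=> c k /fp.
by apply/matrixP => j i; rewrite !mxE.
Qed.

End DifferenceMatrix.

Arguments diffmx {R} p.

Section GreenFunction.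
Variables (R : numFieldType) (N : nat).

(* The entries rho_kl of R^-1 (of size N-1), extended by 0 to k, l in {0, N}. *)
Definition rho (k l : nat) : R := (2 * (minn k l * (N - maxn k l)))%:R / N%:R.

Definition rho_diff (j k : nat) : R := rho j k - rho j.-1 k.

Lemma rhoC k l : rho k l = rho l k.
Proof. by rewrite /rho minnC maxnC. Qed.

Lemma rho0 l : rho 0 l = 0.
Proof. by rewrite /rho min0n muln0 mul0r. Qed.

Lemma rho_out k l : (N <= k)%N -> rho k l = 0.
Proof. by move=> Nk; rewrite /rho (_ : N - maxn k l = 0)%N ?muln0 ?mul0r //; lia. Qed.

Lemma rho_diff0 j : rho_diff j 0 = 0.
Proof. by rewrite /rho_diff !(rhoC _ 0) !rho0 subr0. Qed.

Lemma rho_diff_out j k : (N <= k)%N -> rho_diff j k = 0.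
Proof. by move=> Nk; rewrite /rho_diff !(rhoC _ k) !rho_out // subr0. Qed.

Lemma rho_diff_le j k : (0 < j)%N -> (j <= k <= N)%N ->
  rho_diff j k = (2 * (N - k))%:R / N%:R.
Proof.
move=> j0 /andP[jk kN]; rewrite /rho_diff /rho -mulrBl -natrB; last first.
  by apply: leq_mul => //; apply: leq_mul; lia.
congr (_%:R / _); rewrite -mulnBr; congr (2 * _)%N.
rewrite (_ : minn j k = j) 1?(_ : minn j.-1 k = j.-1) 1?(_ : maxn j k = k)
        1?(_ : maxn j.-1 k = k); try lia.
by case: j j0 jk => // j _ _; rewrite -mulnBl subSnn mul1n.
Qed.

Lemma rho_diff_gt j k : (k < j <= N)%N -> rho_diff j k = - ((2 * k)%:R / N%:R).
Proof.
move=> /andP[kj jN]; rewrite /rho_diff /rho -mulrBl -opprB -mulNr -natrB; last first.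
  by apply: leq_mul => //; apply: leq_mul; lia.
congr (- _%:R / _); rewrite -mulnBr; congr (2 * _)%N.
rewrite (_ : minn j k = k) 1?(_ : minn j.-1 k = k) 1?(_ : maxn j k = j)
        1?(_ : maxn j.-1 k = j.-1); try lia.
by rewrite -mulnBr (_ : N - j.-1 - (N - j) = 1)%N ?muln1 //; lia.
Qed.

Definition ckl_weight (k l j : nat) : R :=
  if (j <= k)%N then 2%:R * (N%:R - 1) / N%:R - 4%:R * (N%:R - k%:R) / (k%:R * N%:R)
  else if (j <= l)%N then 2%:R * (N%:R + 1) / N%:R
  else 2%:R * (N%:R - 1) / N%:R - 4%:R * l%:R / (N%:R * (N%:R - l%:R)).

Definition cl_weight (l i : nat) : R :=
  if (i <= 1)%N then - (2%:R * (N%:R - 1) / N%:R)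
  else if (i <= l)%N then 2%:R * (N%:R + 1) / N%:R
  else (2%:R * (N%:R - 1) * (N - l)%:R - 4%:R * l%:R) / ((N - l)%:R * N%:R).

Lemma rho_diff_weight k l j : (0 < k)%N -> (k <= l < N)%N -> (0 < j <= N)%N ->
  rho_diff j j - rho_diff j j.-1 - 2%:R * (rho_diff j k * rho_diff j l) / rho k l
  = ckl_weight k l j.
Proof.
move=> k0 /andP[kl lN]; case: j => // j /andP[_ jN].
have N0 : N%:R != 0 :> R by rewrite pnatr_eq0; lia.
have k0' : k%:R != 0 :> R by rewrite pnatr_eq0; lia.
have lN' : N%:R - l%:R != 0 :> R by rewrite -natrB ?pnatr_eq0; lia.
have -> : rho k l = (2 * (k * (N - l)))%:R / N%:R.
  by rewrite /rho (minn_idPl kl) (maxn_idPr kl).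
rewrite rho_diff_le ?leqnn // rho_diff_gt /=; last lia.
rewrite /ckl_weight; case: (leqP j.+1 k) => jk; last case: (leqP j.+1 l) => jl.
- rewrite !rho_diff_le ?jk 1?(leq_trans jk kl); try lia.
  by rewrite !natrM !natrB; try lia; field; rewrite N0 k0' lN'.
- rewrite rho_diff_gt ?jk ?jN // rho_diff_le ?jl; try lia.
  by rewrite !natrM !natrB; try lia; field; rewrite N0 k0' lN'.
- rewrite !rho_diff_gt ?jk ?jl ?jN //.
  by rewrite !natrM !natrB; try lia; field; rewrite N0 k0' lN'.
Qed.

Lemma ckl_weight_ge0 k l j : (2 <= k)%N -> (k <= l)%N -> (l.+2 <= N)%N ->
  0 <= ckl_weight k l j.
Proof.
move=> k2 kl lN.
have N0 : N%:R != 0 :> R by rewrite pnatr_eq0; lia.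
have k0 : k%:R != 0 :> R by rewrite pnatr_eq0; lia.
have lN' : N%:R - l%:R != 0 :> R by rewrite -natrB ?pnatr_eq0; lia.
rewrite /ckl_weight; case: ifP => _; last case: ifP => _.
- rewrite (_ : _ - _ = (2 * N * (k - 2) + 2 * k)%:R / (k * N)%:R).
    by rewrite divr_ge0 ?ler0n.
  by rewrite !natrD !natrM natrB; [field; rewrite N0 k0 | lia].
- by rewrite divr_ge0 ?mulr_ge0 ?addr_ge0 ?ler0n.
- rewrite (_ : _ - _ = (2 * N * (N - l - 2) + 2 * (N - l))%:R / (N * (N - l))%:R).
    by rewrite divr_ge0 ?ler0n.
  by rewrite !natrD !natrM !natrB; try lia; field; rewrite N0 lN'.
Qed.

Lemma ckl_weight_first l i : (0 < l < N)%N -> ckl_weight 1 l i = cl_weight l i.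
Proof.
move=> /andP[l0 lN].
have N0 : N%:R != 0 :> R by rewrite pnatr_eq0; lia.
have lN' : N%:R - l%:R != 0 :> R by rewrite -natrB ?pnatr_eq0; lia.
rewrite /ckl_weight /cl_weight; case: ifP => _; first by field.
by case: ifP => // _; rewrite natrB; [field; rewrite N0 lN' | lia].
Qed.

Lemma ckl_weight_last k i : (0 < k < N)%N -> (0 < i <= N)%N ->
  ckl_weight k N.-1 (N.+1 - i) = cl_weight (N - k) i.
Proof.
move=> /andP[k0 kN] /andP[i0 iN].
have N0 : N%:R != 0 :> R by rewrite pnatr_eq0; lia.
have k0' : k%:R != 0 :> R by rewrite pnatr_eq0; lia.
rewrite /ckl_weight /cl_weight.
case: (leqP i 1) => i1; last case: (leqP i (N - k)) => ik.
- rewrite (_ : N.+1 - i <= k = false)%N 1?(_ : N.+1 - i <= N.-1 = false)%N; try lia.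
  rewrite -subn1 natrB; last by lia.
  by field; rewrite N0 (_ : _ - _ = 1) ?oner_eq0 //; ring.
- by rewrite (_ : N.+1 - i <= k = false)%N 1?(_ : N.+1 - i <= N.-1 = true)%N //; lia.
- rewrite (_ : N.+1 - i <= k = true)%N 1?(_ : N - (N - k) = k)%N ?natrB; try lia.
  by field; rewrite N0 k0'.
Qed.
End GreenFunction.

Arguments rho {R} N k l.
Arguments rho_diff {R} N j k.
Arguments ckl_weight {R} N k l j.
Arguments cl_weight {R} N l i.

Section TridiagonalMatrices.
Variable R : realFieldType.

Definition rhomx p : 'M[R]_p := \matrix_(i, j) rho p.+1 i.+1 j.+1.

Lemma trmx_rhomx p : (rhomx p)^T = rhomx p.
Proof. by apply/matrixP => i j; rewrite !mxE rhoC. Qed.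

Lemma diffmx_rhomx p : diffmx p *m rhomx p = \matrix_(j, k) rho_diff p.+1 j.+1 k.+1.
Proof.
rewrite mul_diffmx; first by apply/matrixP => j k; rewrite !mxE.
  exact: rho0.
by move=> c k pc; apply: rho_out.
Qed.

Lemma Rmat_factor p : Rmat R p = 2^-1 *: ((diffmx p)^T *m diffmx p).
Proof.
rewrite [X in _ *m X]/diffmx trmx_diffmx_mul.
apply/matrixP => i j; rewrite !mxE /diffn -val_eqE /= !eqSS.
move: (i : nat) (j : nat) => a b; rewrite (eq_sym b.+1).
case: (a =P b) => ?; case: (a.+1 =P b) => ?; case: (a =P b.+1) => ? /=; try lia.
all: by field.
Qed.

Lemma Amat_factor p (s : 'I_p.+1 -> R) :
  Amat s = (diffmx p)^T *m diag_mx (\row_j at1 s j.+1 ^+ 2) *m diffmx p.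
Proof.
rewrite -[RHS]mulmxA.
have -> : diag_mx (\row_j at1 s j.+1 ^+ 2) *m diffmx p =
          \matrix_(j, k) (at1 s j.+1 ^+ 2 * diffn R j.+1 k.+1).
  by rewrite mul_diag_mx; apply/matrixP => j k; rewrite !mxE.
rewrite (trmx_diffmx_mul _ _ _ (fun j k => at1 s j ^+ 2 * diffn R j k)).
apply/matrixP => i j; rewrite !mxE /diffn -val_eqE /= !eqSS.
move: (i : nat) (j : nat) => a b; rewrite (eq_sym b.+1).
case: (a =P b) => ?; case: (a.+1 =P b) => ?; case: (a =P b.+1) => ? /=; try lia.
- by subst b; ring.
- by subst b; rewrite (maxn_idPr (leqnSn a)); ring.
- by subst a; rewrite (maxn_idPl (leqnSn b)); ring.
- by ring.
Qed.

Lemma Rmat_rhomx p : Rmat R p *m rhomx p = 1%:M.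
Proof.
rewrite Rmat_factor -scalemxAl -mulmxA diffmx_rhomx.
rewrite (trmx_diffmx_mul _ _ _ (rho_diff p.+1)); apply/matrixP => i k.
rewrite !mxE -val_eqE /=; have ip := ltn_ord i; have kp := ltn_ord k.
case: (ltngtP i k) => [ik|ki|<-].
- by rewrite !rho_diff_le ?subrr ?mulr0 //; lia.
- by rewrite !rho_diff_gt ?subrr ?mulr0 //; lia.
- rewrite rho_diff_le ?rho_diff_gt //; try lia.
  by rewrite /= !natrM natrB; [field; rewrite nat1r pnatr_eq0 | lia].
Qed.

Lemma invmx_Rmat p : invmx (Rmat R p) = rhomx p.
Proof.
have RG := Rmat_rhomx p; have [Ru _] := mulmx1_unit RG.
by rewrite -[invmx _]mulmx1 -RG mulKmx.
Qed.

Lemma mxat_Ordinal {n i j} (ilt : (i < n)%N) (jlt : (j < n)%N) (M : 'M[R]_n) :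
  mxat M i.+1 j.+1 = M (Ordinal ilt) (Ordinal jlt).
Proof. by rewrite /mxat /= !insubT. Qed.

Lemma ckl_weighted_sum p (s : 'I_p.+1 -> R) k l : (0 < k)%N -> (k <= l <= p)%N ->
  ckl s k l = \sum_(1 <= j < p.+2) at1 s j ^+ 2 * ckl_weight p.+1 k l j.
Proof.
move=> k0 /andP[kl lp].
set d := \row_(j < p.+1) at1 s j.+1 ^+ 2.
have trGA : \tr (rhomx p *m Amat s) =
    \sum_(j < p.+1) d 0 j * (rho_diff p.+1 j.+1 j.+1 - rho_diff p.+1 j.+1 j).
  rewrite Amat_factor !mulmxA mxtrace_mulC !mulmxA (diffmx_rhomx p).
  rewrite (mul_trmx_diffmx _ _ _ (rho_diff p.+1)); last 2 first.
  - exact: rho_diff0.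
  - by move=> i c pc; apply: rho_diff_out.
  by apply: eq_bigr => j _; rewrite mul_mx_diag !mxE mulrC.
have GAG : rhomx p *m Amat s *m rhomx p =
    (diffmx p *m rhomx p)^T *m diag_mx d *m (diffmx p *m rhomx p).
  by rewrite Amat_factor trmx_mul trmx_rhomx !mulmxA.
rewrite /ckl invmx_Rmat trGA GAG.
case: k k0 kl => // k _ kl; case: l kl lp => // l kl lp.
have kp : (k < p)%N by lia.
rewrite !(mxat_Ordinal kp lp) mxE big_add1 big_mkord /=.
rewrite mulr_sumr mulr_suml -sumrB; apply: eq_bigr => j _.
rewrite mul_mx_diag (diffmx_rhomx p) !mxE -rho_diff_weight //=; first by ring.
by rewrite kl.
Qed.
End TridiagonalMatrices.

Section QuadraticForms.
Variable R : realFieldType.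

Lemma cl_weighted_sum M (a : 'I_M -> R) l : (0 < l < M)%N ->
  cl a l = \sum_(1 <= i < M.+1) at1 a i ^+ 2 * cl_weight M l i.
Proof.
move=> /andP[l0 lM].
rewrite (big_cat_nat (n := 2)) /=; try lia.
rewrite (big_cat_nat (m := 2) (n := l.+1)) /=; try lia.
rewrite big_nat1 /cl addrA; congr (_ + _ + _).
- by rewrite mulrC.
- rewrite mulr_sumr; apply: eq_big_nat => i /andP[i1 il].
  rewrite /cl_weight (_ : (i <= 1)%N = false) 1?(_ : (i <= l)%N = true) 1?mulrC //; lia.
- rewrite mulr_sumr; apply: eq_big_nat => i /andP[li iM].
  rewrite /cl_weight (_ : (i <= 1)%N = false) 1?(_ : (i <= l)%N = false) 1?mulrC //; lia.
Qed.

Lemma at1_revv M (a : 'I_M -> R) i : (0 < i <= M)%N ->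
  at1 (revv a) i = at1 a (M.+1 - i).
Proof.
move=> /andP[i0 iM]; rewrite /at1 !insubT; try lia.
by move=> ilt jlt /=; rewrite /revv; congr (a _); apply: val_inj => /=; lia.
Qed.
End QuadraticForms.

Theorem lemma4p6 (R : realFieldType) (N : nat) (sigma : 'I_N -> R) :
  (2 <= N)%N -> (forall i, 0 < sigma i) ->
  [/\ (forall k l : nat, (2 <= k)%N -> (k <= l)%N -> (l <= N - 2)%N ->
         0 <= ckl sigma k l),
      (forall l : nat, (1 <= l)%N -> (l <= N - 1)%N ->
         ckl sigma 1 l = cl sigma l)
    & (forall k : nat, (1 <= k)%N -> (k <= N - 1)%N ->
         ckl sigma k (N - 1) = cl (revv sigma) (N - k))].
Proof.
case: N sigma => [|p] sigma // N2 _; split.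
- move=> k l k2 kl lN; rewrite ckl_weighted_sum; [|lia|lia].
  by apply: sumr_ge0 => j _; rewrite mulr_ge0 ?sqr_ge0 // ckl_weight_ge0 //; lia.
- move=> l l1 lN; rewrite ckl_weighted_sum ?cl_weighted_sum; [|lia..].
  by apply: eq_big_nat => j _; rewrite ckl_weight_first //; lia.
- move=> k k1 kN; rewrite subn1 ckl_weighted_sum ?cl_weighted_sum; [|lia..].
  rewrite [LHS]big_nat_rev; apply: eq_big_nat => i /andP[i1 ip].
  rewrite at1_revv -?ckl_weight_last; [|lia..].
  by rewrite (_ : 1 + p.+2 - i.+1 = p.+2 - i)%N //; lia.
Qed.
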